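(* Let $R$ be a ring, $a,b\in C(R)$ (the center of $R$) and $n\in\mathbb{N}$. Then $R$ is weakly $(ax^{2n}-bx)$-$r$-clean if and only if $R$ is weakly $(ax^{2n}+bx)$-$r$-clean.
   Context: Rings are associative with identity; $C(R)$ is the center of $R$ and $Reg(R)=\{r\in R: r=ryr \text{ for some } y\in R\}$. For a fixed polynomial $g(x)\in C(R)[x]$, an element $z\in R$ is weakly $g(x)$-$r$-clean if $z=r+s$ or $z=r-s$ with $r\in Reg(R)$ and $g(s)=0$; $R$ is weakly $g(x)$-$r$-clean if all its elements are. *)

From mathcomp Require Import all_boot all_algebra.
Set Implicit Arguments. Unset Strict Implicit. Unset Printing Implicit Defensive.
Import GRing.Theory.
Local Open Scope ring_scope.

Definition central (R : nzRingType) (c : R) : Prop := forall r : R, c * r = r * c.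

Definition regular (R : nzRingType) (r : R) : Prop := exists y : R, r = r * y * r.

Definition weakly_g_r_clean_elt (R : nzRingType) (g : {poly R}) (z : R) : Prop :=
  exists r s : R, regular r /\ g.[s] = 0 /\ (z = r + s \/ z = r - s).

Definition weakly_g_r_clean (R : nzRingType) (g : {poly R}) : Prop :=
  forall z : R, weakly_g_r_clean_elt g z.

From mathcomp Require Import all_boot all_algebra.
Local Open Scope ring_scope.
Import GRing.Theory.

(* Since x^(2n) is even and x is odd, s is a root of a x^(2n) - b x exactly
   when -s is a root of a x^(2n) + b x, and z = r + s (resp. r - s) reads
   z = r - (-s) (resp. r + (-s)). *)

Section WeaklyCleanReflection.

Variable R : nzRingType.

Lemma weakly_g_r_clean_eltN (g h : {poly R}) (z : R) :
  (forall s, h.[- s] = g.[s]) ->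
  weakly_g_r_clean_elt g z -> weakly_g_r_clean_elt h z.
Proof.
move=> hN [r [s [reg_r [gs0 z_rs]]]].
exists r, (- s); split=> //; split; first by rewrite hN.
by rewrite opprK; case: z_rs => ->; [right | left].
Qed.

Lemma weakly_g_r_cleanN (g h : {poly R}) :
  (forall s, h.[- s] = g.[s]) ->
  weakly_g_r_clean g <-> weakly_g_r_clean h.
Proof.
move=> hN; have gN s : g.[- s] = h.[s] by rewrite -hN opprK.
by split=> clean z; [exact: weakly_g_r_clean_eltN hN (clean z) |
  exact: weakly_g_r_clean_eltN gN (clean z)].
Qed.

Lemma horner_even_add_oddN (a b s : R) (n : nat) :
  (a%:P * 'X^(2 * n) + b%:P * 'X).[- s] = (a%:P * 'X^(2 * n) - b%:P * 'X).[s].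
Proof.
rewrite !hornerD hornerN !hornerCM !hornerXn !hornerX.
by rewrite exprM sqrrN -exprM mulrN.
Qed.

End WeaklyCleanReflection.

Theorem theorem3p4 (R : nzRingType) (a b : R) (n : nat) :
  central a -> central b ->
  (weakly_g_r_clean (a%:P * 'X^(2 * n) - b%:P * 'X) <->
   weakly_g_r_clean (a%:P * 'X^(2 * n) + b%:P * 'X)).
Proof.
move=> _ _; apply: weakly_g_r_cleanN => s.
exact: horner_even_add_oddN.
Qed.
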